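(* Let $n\geq 2$, $1\leq k\leq n-1$ and $w\in\mathfrak{S}_n$. The intersection (as sets of positions) of a maximal $k$-ascending section and a maximal $k$-descending section of $w$ is empty or consists of one element. Two distinct maximal $k$-ascending sections of $w$ do not intersect.
   Context: $\mathfrak{S}_n$ is the set of permutations $w=w_1\cdots w_n$ of $\{1,\dots,n\}$. A section of $w$ is a consecutive block $w_sw_{s+1}\cdots w_t$ ($s\le t$), identified with its set of positions $\{s,\dots,t\}$. A section $w_s\cdots w_t$ is a $k$-up if $s<t$ and $w_t-w_s\geq k$, and a $k$-down if $s<t$ and $w_s-w_t\geq k$; a $k$-up/$k$-down ''in'' $w_a\cdots w_b$ means one $w_s\cdots w_t$ with $a\le s<t\le b$. A section $w_i\cdots w_j$ ($i<j$) is $k$-ascending if $w_i=\min\{w_i,\dots,w_j\}$, $w_j=\max\{w_i,\dots,w_j\}$, $w_j-w_i\geq k$, and there is no $k$-down in $w_i\cdots w_j$. It is $k$-descending if $w_i=\max\{w_i,\dots,w_j\}$, $w_j=\min\{w_i,\dots,w_j\}$, $w_i-w_j\geq k$, and there is no $k$-up in $w_i\cdots w_j$. A $k$-ascending (resp. $k$-descending) section is maximal if it is not contained in another $k$-ascending (resp. $k$-descending) section. *)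

From mathcomp Require Import all_boot all_order all_fingroup.
Set Implicit Arguments. Unset Strict Implicit. Unset Printing Implicit Defensive.

(* Permutations of {1..n} are modelled as w : 'S_n (permutations of 'I_n =
   {0..n-1}); positions and values are shifted by 1, which does not affect
   differences or comparisons.  A section w_s..w_t is identified by its pair
   of endpoint positions (s,t), s <= t, its set of positions being [s,t]. *)

Section Sections.
Variable n : nat.
Variable w : 'S_n.

Definition wv (p : 'I_n) : nat := w p.

Definition sect (s t : 'I_n) : {set 'I_n} := [set p : 'I_n | (s <= p <= t)%N].

Definition kup (k : nat) (s t : 'I_n) : bool := (s < t)%N && (wv s + k <= wv t)%N.
Definition kdown (k : nat) (s t : 'I_n) : bool := (s < t)%N && (wv t + k <= wv s)%N.

Definition has_kup_in (k : nat) (a b : 'I_n) : bool :=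
  [exists s : 'I_n, exists t : 'I_n, [&& (a <= s)%N, (t <= b)%N & kup k s t]].
Definition has_kdown_in (k : nat) (a b : 'I_n) : bool :=
  [exists s : 'I_n, exists t : 'I_n, [&& (a <= s)%N, (t <= b)%N & kdown k s t]].

Definition k_ascending (k : nat) (i j : 'I_n) : bool :=
  [&& (i < j)%N,
      [forall p in sect i j, wv i <= wv p]%N,
      [forall p in sect i j, wv p <= wv j]%N,
      (wv i + k <= wv j)%N &
      ~~ has_kdown_in k i j].

Definition k_descending (k : nat) (i j : 'I_n) : bool :=
  [&& (i < j)%N,
      [forall p in sect i j, wv p <= wv i]%N,
      [forall p in sect i j, wv j <= wv p]%N,
      (wv j + k <= wv i)%N &
      ~~ has_kup_in k i j].

Definition max_k_ascending (k : nat) (i j : 'I_n) : bool :=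
  k_ascending k i j &&
  [forall i' : 'I_n, forall j' : 'I_n,
     (k_ascending k i' j' && (sect i j \subset sect i' j')) ==> ((i' == i) && (j' == j))].

Definition max_k_descending (k : nat) (i j : 'I_n) : bool :=
  k_descending k i j &&
  [forall i' : 'I_n, forall j' : 'I_n,
     (k_descending k i' j' && (sect i j \subset sect i' j')) ==> ((i' == i) && (j' == j))].

End Sections.

From mathcomp Require Import all_boot all_order all_fingroup.
From mathcomp Require Import zify.

Set Implicit Arguments.
Unset Strict Implicit.
Unset Printing Implicit Defensive.

(* If a k-ascending section [i,j] and a k-descending section [i',j'] share two
   positions, either one contains the other, contradicting the absence of
   k-downs (resp. k-ups), or they overlap in a staggered way; then both
   endpoints of the overlap are extremal in both sections, so w takes the same
   value at them and they coincide.  Two overlapping k-ascending sections glue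
   to a k-ascending section containing both: a k-down crossing the overlap
   would start below the maximum of the first one, giving a k-down inside the
   second.  Maximality then makes both equal to their union. *)

Section Sections.
Variables (n k : nat) (w : 'S_n).

Lemma wv_inj (a b : 'I_n) : wv w a = wv w b -> a = b.
Proof. by move/val_inj/perm_inj. Qed.

Lemma sect_subset (i j i' j' : 'I_n) :
  (i' <= i)%N -> (j <= j')%N -> sect i j \subset sect i' j'.
Proof. by move=> le_i le_j; apply/subsetP=> p; rewrite !inE => /andP[]; lia. Qed.

Lemma k_ascendingP (i j : 'I_n) :
  reflect
    [/\ (i < j)%N,
        forall p : 'I_n, (i <= p <= j)%N -> (wv w i <= wv w p)%N,
        forall p : 'I_n, (i <= p <= j)%N -> (wv w p <= wv w j)%N,
        (wv w i + k <= wv w j)%N &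
        forall s t : 'I_n, (i <= s)%N -> (s < t <= j)%N ->
          (wv w s < wv w t + k)%N]
    (k_ascending w k i j).
Proof.
apply: (iffP and5P) => -[lt_ij min_i max_j gap no_down]; split=> //.
- by move=> p p_ij; apply: (forall_inP min_i); rewrite inE.
- by move=> p p_ij; apply: (forall_inP max_j); rewrite inE.
- move=> s t le_is /andP[lt_st le_tj]; rewrite ltnNge.
  by move/existsPn: no_down => /(_ s) /existsPn /(_ t); rewrite le_is le_tj /kdown lt_st.
- by apply/forall_inP=> p; rewrite inE; apply: min_i.
- by apply/forall_inP=> p; rewrite inE; apply: max_j.
- apply/existsPn=> s; apply/existsPn=> t; apply/negP=> /and3P[le_is le_tj /andP[lt_st]].
  by rewrite leqNgt no_down // lt_st le_tj.
Qed.

Lemma k_descendingP (i j : 'I_n) :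
  reflect
    [/\ (i < j)%N,
        forall p : 'I_n, (i <= p <= j)%N -> (wv w p <= wv w i)%N,
        forall p : 'I_n, (i <= p <= j)%N -> (wv w j <= wv w p)%N,
        (wv w j + k <= wv w i)%N &
        forall s t : 'I_n, (i <= s)%N -> (s < t <= j)%N ->
          (wv w t < wv w s + k)%N]
    (k_descending w k i j).
Proof.
apply: (iffP and5P) => -[lt_ij max_i min_j gap no_up]; split=> //.
- by move=> p p_ij; apply: (forall_inP max_i); rewrite inE.
- by move=> p p_ij; apply: (forall_inP min_j); rewrite inE.
- move=> s t le_is /andP[lt_st le_tj]; rewrite ltnNge.
  by move/existsPn: no_up => /(_ s) /existsPn /(_ t); rewrite le_is le_tj /kup lt_st.
- by apply/forall_inP=> p; rewrite inE; apply: max_i.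
- by apply/forall_inP=> p; rewrite inE; apply: min_j.
- apply/existsPn=> s; apply/existsPn=> t; apply/negP=> /and3P[le_is le_tj /andP[lt_st]].
  by rewrite leqNgt no_up // lt_st le_tj.
Qed.

Lemma max_k_ascending_sub (i j i' j' : 'I_n) :
  max_k_ascending w k i j -> k_ascending w k i' j' ->
  sect i j \subset sect i' j' -> (i', j') = (i, j).
Proof.
case/andP=> _ /forallP/(_ i')/forallP/(_ j')/implyP maxij asc' sub.
by case/andP: (maxij (introT andP (conj asc' sub))) => /eqP-> /eqP->.
Qed.

Lemma k_ascending_k_descending_meet (i j i' j' x y : 'I_n) :
  k_ascending w k i j -> k_descending w k i' j' ->
  x \in sect i j :&: sect i' j' -> y \in sect i j :&: sect i' j' -> x = y.
Proof.
move=> /k_ascendingP[lt_ij min_i max_j gap no_down].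
move=> /k_descendingP[lt_ij' max_i' min_j' gap' no_up].
rewrite !inE => /andP[/andP[x1 x2] /andP[x3 x4]] /andP[/andP[y1 y2] /andP[y3 y4]].
apply/eqP; apply: contraT => ne_xy.
have {ne_xy} /eqP ne_xy : (x : nat) != y by [].
case: (leqP i i') => [le_i|lt_i]; case: (leqP j j') => [le_j|lt_j].
- have eq_w : wv w i' = wv w j.
    apply/eqP; rewrite eqn_leq max_j ?max_i' //; lia.
  by move/wv_inj: eq_w => eq_ij; subst; lia.
- by have := no_down i' j' le_i; rewrite lt_ij' ltnW //; lia.
- by have := no_up i j (ltnW lt_i); rewrite lt_ij le_j //; lia.
- have eq_w : wv w i = wv w j'.
    apply/eqP; rewrite eqn_leq min_i ?min_j' //; lia.
  by move/wv_inj: eq_w => eq_ij; subst; lia.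
Qed.

Lemma k_ascending_union (i j i' j' : 'I_n) :
  k_ascending w k i j -> k_ascending w k i' j' -> (i <= i' <= j)%N ->
  (j <= j')%N -> k_ascending w k i j'.
Proof.
move=> /k_ascendingP[lt_ij min_i max_j gap no_down].
move=> /k_ascendingP[_ min_i' max_j' _ no_down'] /andP[le_ii' le_i'j] le_jj'.
have j_in' : (i' <= j <= j')%N by rewrite le_i'j.
apply/k_ascendingP; split.
- lia.
- move=> p /andP[le_ip le_pj']; case: (leqP p j) => le_pj; first by rewrite min_i ?le_ip.
  by rewrite (leq_trans (min_i i' _)) ?min_i' ?le_ii' ?le_i'j //; lia.
- move=> p /andP[le_ip le_pj']; case: (leqP p j) => le_pj; last by rewrite max_j'; lia.
  by rewrite (leq_trans (max_j p _)) ?max_j' ?le_ip.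
- by rewrite (leq_trans gap) ?max_j'.
- move=> s t le_is /andP[lt_st le_tj'].
  case: (leqP t j) => le_tj; first by rewrite no_down ?lt_st.
  case: (leqP i' s) => le_i's; first by rewrite no_down' ?lt_st.
  have := no_down' j t le_i'j (introT andP (conj le_tj le_tj')).
  by have := max_j s; rewrite le_is /=; lia.
Qed.

Lemma max_k_ascending_overlap (i j i' j' : 'I_n) :
  max_k_ascending w k i j -> max_k_ascending w k i' j' -> (i <= i' <= j)%N ->
  (i, j) = (i', j').
Proof.
move=> max_ij max_ij' range; have [asc_ij asc_ij'] := (proj1 (andP max_ij), proj1 (andP max_ij')).
case/andP: (range) => le_ii' le_i'j.
case: (leqP j' j) => [le_j'j|lt_jj'].
  by rewrite (max_k_ascending_sub max_ij' asc_ij) ?sect_subset.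
have asc_u := k_ascending_union asc_ij asc_ij' range (ltnW lt_jj').
rewrite -(max_k_ascending_sub max_ij asc_u) ?sect_subset ?(ltnW lt_jj') //.
by rewrite -(max_k_ascending_sub max_ij' asc_u) ?sect_subset.
Qed.

End Sections.

Theorem lemma2p6 (n k : nat) (w : 'S_n) :
  (2 <= n)%N -> (1 <= k)%N -> (k <= n - 1)%N ->
  (forall i j i' j' : 'I_n,
     max_k_ascending w k i j -> max_k_descending w k i' j' ->
     (#|sect i j :&: sect i' j'| <= 1)%N) /\
  (forall i j i' j' : 'I_n,
     max_k_ascending w k i j -> max_k_ascending w k i' j' ->
     (i, j) <> (i', j') ->
     sect i j :&: sect i' j' = set0).
Proof.
move=> _ _ _; split.
- move=> i j i' j' /andP[asc _] /andP[desc _]; apply/card_le1_eqP=> x y x_in y_in.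
  exact: k_ascending_k_descending_meet asc desc y_in x_in.
- move=> i j i' j' max_ij max_ij' ne; apply/setP=> p; rewrite !inE.
  apply/negP=> /andP[/andP[le_ip le_pj] /andP[le_i'p le_pj']]; apply: ne.
  case: (leqP i i') => [le_ii'|lt_i'i].
  + by apply: (max_k_ascending_overlap max_ij max_ij'); rewrite le_ii' (leq_trans le_i'p).
  + apply/esym/(max_k_ascending_overlap max_ij' max_ij).
    by rewrite ltnW // (leq_trans le_ip).
Qed.
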